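(* Let $H$ be a hero and let $c$ be the maximum dichromatic number of a tournament containing no induced subdigraph isomorphic to $H$. Then every oriented graph $D$ in which both $x^+$ and $x^-$ induce tournaments for every vertex $x$, and which contains no induced subdigraph isomorphic to $H$, has dichromatic number at most $2c$.
   Context: Digraphs are finite, no loops, no parallel arcs; an oriented graph has no digon. $x^+$, $x^-$ are out- and in-neighbourhoods. The dichromatic number of a digraph is the least number of colours in a vertex colouring in which every colour class induces a subdigraph with no directed cycle. A hero is a tournament $H$ such that the tournaments containing no induced copy of $H$ have bounded dichromatic number (so $c$ is finite). *)

From Stdlib Require Import ClassicalEpsilon.
From mathcomp Require Import all_boot.
Set Implicit Arguments. Unset Strict Implicit. Unset Printing Implicit Defensive.

Section Digraphs.
Variables (V : finType) (E : rel V).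

(* finite digraph: no loops (parallel arcs impossible with a relation) *)
Definition digraph := forall x, ~~ E x x.

Definition oriented := digraph /\ forall x y, E x y -> ~~ E y x.

Definition tournament_on (A : {set V}) :=
  [/\ forall x, x \in A -> ~~ E x x,
      forall x y, x \in A -> y \in A -> E x y -> ~~ E y x &
      forall x y, x \in A -> y \in A -> x != y -> E x y || E y x].

Definition tournament := tournament_on [set: V].

Definition out_nbhd (x : V) : {set V} := [set y | E x y].
Definition in_nbhd (x : V) : {set V} := [set y | E y x].

Definition dicycle (s : seq V) := [/\ uniq s, 2 <= size s & cycle E s].

Definition acyclic_set (A : {set V}) :=
  forall s, dicycle s -> ~ all (fun x => x \in A) s.

Definition dicolourable (k : nat) :=
  exists f : V -> 'I_k, forall i : 'I_k, acyclic_set [set x | f x == i].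

Definition dicolourableb (k : nat) : bool :=
  if excluded_middle_informative (dicolourable k) then true else false.

Lemma dicolourable_exists : exists k, dicolourableb k.
Proof.
exists #|V|; rewrite /dicolourableb.
case: excluded_middle_informative => // [[]].
exists (@enum_rank V) => i s [us ss _] /allP sA.
case: s us ss sA => [|x [|y s]] //= /andP [xns _] _ sA.
have hx := sA x (mem_head _ _); have hy := sA y ltac:(by rewrite !inE eqxx orbT).
rewrite !inE in hx hy; move: xns; rewrite inE negb_or => /andP [xy _].
by move: xy; rewrite -(inj_eq (@enum_rank_inj V)) (eqP hx) (eqP hy) eqxx.
Qed.

Definition dichromatic : nat := ex_minn dicolourable_exists.

End Digraphs.

Definition contains_induced (H : finType) (EH : rel H) (V : finType) (E : rel V) :=
  exists f : H -> V, injective f /\ forall u v, EH u v = E (f u) (f v).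

Definition hero (H : finType) (EH : rel H) :=
  tournament EH /\
  exists c, forall (T : finType) (ET : rel T),
    tournament ET -> ~ contains_induced EH ET -> dichromatic ET <= c.

(* Colour a vertex set [S] by induction on its size.  Pick [x] in [S]
   and let [R] be the set of vertices reachable from [x] inside [S], layered by
   the breadth-first distance [d] from [x].  The key structural fact
   ([layer_strong_adjacent]) is that two vertices strongly connected by arcs
   inside one layer are adjacent, so every such strong component ("block")
   induces an H-free tournament and is [c]-colourable.  Colour [v] in [R] with
   the palette chosen by the parity of [d v] and the colour of [v] in its block:
   a monochromatic cycle cannot increase the distance, hence lies in one layer
   and one block, which is impossible ([layer_colouring]).  As [R] is closed
   under out-arcs inside [S], every cycle of [S] avoids [R] or lies in it, so
   this colouring glues with one of [S :\: R] ([colouring_glue]). *)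

From mathcomp Require Import all_boot zify.
From Stdlib Require Import ClassicalEpsilon Classical.
Set Implicit Arguments. Unset Strict Implicit. Unset Printing Implicit Defensive.

Lemma palette_eq (c : nat) (b1 b2 : bool) a1 a2 :
  a1 < c -> a2 < c -> b1 * c + a1 = b2 * c + a2 -> b1 = b2 /\ a1 = a2.
Proof. by case: b1; case: b2 => /=; lia. Qed.

Lemma connect_forward (T : finType) (e : rel T) (P : pred T) y z :
  connect e y z -> P y -> (forall u v, e u v -> P u -> P v) -> P z.
Proof.
move=> /connectP [p ep ->] + eP; elim: p y ep => //= v p IHp y /andP [yv vp] Py.
exact: IHp vp (eP _ _ yv Py).
Qed.

Lemma cycle_forward (T : finType) (e : rel T) (P : pred T) s :
  cycle e s -> {in s &, forall u v, e u v -> P u -> P v} ->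
  {in s &, forall y z, P y -> P z}.
Proof.
pose es := [rel u v | [&& e u v, u \in s & v \in s]].
move=> cs eP y z ys zs Py; apply: (@connect_forward _ es _ y) Py _.
- apply: connect_cycle ys zs; apply: sub_in_cycle (allss s) cs.
  by move=> u v us vs uv; rewrite /= uv us vs.
- by move=> u v /and3P [uv us vs]; apply: eP.
Qed.

Section Colourings.
Variables (V : finType) (E : rel V).

Definition colouring (A : {set V}) (k : nat) (f : V -> nat) :=
  {in A, forall v, f v < k} /\ forall i, acyclic_set E [set v in A | f v == i].

Lemma colouring_cycle A k f s :
  colouring A k f -> dicycle E s -> {subset s <= A} -> {in s &, forall y z, f y = f z} ->
  False.
Proof.
move=> [_ fA] hs sA fs; case: (s) (hs) fs sA => [[_]|y s'] //= hs' fs sA.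
apply: (fA (f y) _ hs'); apply/allP => z zs.
by rewrite inE sA //= (fs z y zs (mem_head _ _)).
Qed.

Lemma colouring_set0 k f : colouring set0 k f.
Proof.
split=> [v|i s [_ ss _]]; first by rewrite inE.
by case: s ss => //= y s _; rewrite !inE.
Qed.

Lemma dichromatic_le k f : colouring [set: V] k f -> dichromatic E <= k.
Proof.
move=> [fk fA]; rewrite /dichromatic; case: ex_minnP => m _; apply.
rewrite /dicolourableb; case: excluded_middle_informative => // [[]].
exists (fun v => Ordinal (fk v (in_setT v))) => i s hs sA.
apply: (fA i s hs); apply/allP => v /(allP sA); rewrite !inE => /eqP <-.
exact: eqxx.
Qed.

Lemma dichromatic_colouring k :
  dichromatic E <= k -> exists f, colouring [set: V] k f.
Proof.
rewrite /dichromatic; case: ex_minnP => m.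
rewrite /dicolourableb; case: excluded_middle_informative => // [[g hg]] _ _ mk.
exists (fun v => nat_of_ord (g v)); split=> [v _|i s hs sA].
  exact: leq_trans (ltn_ord _) mk.
case: s hs sA => [[]|y s] // hs sA.
apply: (hg (g y) (y :: s) hs); apply/allP => z zs; rewrite inE.
move: (allP sA z zs) (allP sA y (mem_head _ _)); rewrite !inE => /eqP gz /eqP gy.
by apply/eqP/val_inj; rewrite /= gz gy.
Qed.

(* Gluing: if [R] is closed under out-arcs inside [S], every directed cycle of
   [S] lies in [R] or in [S :\: R], so acyclic colourings of [R] and of
   [S :\: R] combine into one of [S], reusing the same palette. *)
Lemma colouring_glue (S R : {set V}) k f g :
  (forall u v, u \in R -> v \in S -> E u v -> v \in R) ->
  colouring R k f -> colouring (S :\: R) k g ->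
  colouring S k (fun v => if v \in R then f v else g v).
Proof.
move=> Rclosed [fk fA] [gk gA]; split=> [v vS|i s hs /allP sA].
  by case: ifP => vR; [apply: fk | apply: gk; rewrite inE vR].
have sS z : z \in s -> z \in S by move/sA; rewrite inE => /andP [].
have hfg z : z \in s -> (if z \in R then f z else g z) = i.
  by move/sA; rewrite inE => /andP [_ /eqP].
have cs : cycle E s by case: hs.
case sR: (has (mem R) s).
- have {}sR z : z \in s -> z \in R.
    case/hasP: sR => y ys yR zs; apply: (cycle_forward cs _ ys zs yR).
    by move=> u v _ vs uv uR; apply: Rclosed uR (sS v vs) uv.
  apply: (colouring_cycle (conj fk fA) hs sR) => y z ys zs.
  by move: (hfg y ys) (hfg z zs); rewrite (sR y ys) (sR z zs) => -> ->.
- have {}sR z : z \in s -> z \notin R by move=> zs; apply: (hasPn (negbT sR)).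
  apply: (colouring_cycle (conj gk gA) hs) => [z zs|y z ys zs].
    by rewrite inE sR // sS.
  by move: (hfg y ys) (hfg z zs); rewrite (negbTE (sR y ys)) (negbTE (sR z zs)) => -> ->.
Qed.

End Colourings.

Section TournamentColouring.
Variables (H : finType) (EH : rel H) (c : nat).
Hypothesis H_free_bound : forall (T : finType) (ET : rel T),
  tournament ET -> ~ contains_induced EH ET -> dichromatic ET <= c.
Variables (V : finType) (E : rel V).
Hypothesis E_H_free : ~ contains_induced EH E.

(* A vertex set of an H-free digraph inducing a tournament induces an H-free
   tournament, hence can be acyclically coloured with [c] colours. *)
Lemma tournament_colouring (K : {set V}) :
  tournament_on E K -> exists g, colouring E K c g.
Proof.
move=> [Kloop Kanti Ktot].
pose T := {v : V | v \in K}.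
pose ET := [rel t u : T | E (val t) (val u)].
have ET_tour : tournament ET.
  split=> [t _|t u _ _|t u _ _ tu] /=.
  - exact: Kloop (valP t).
  - exact: Kanti (valP t) (valP u).
  - by apply: Ktot (valP t) (valP u) _; rewrite (inj_eq val_inj).
have ET_free : ~ contains_induced EH ET.
  move=> [f [finj fE]]; apply: E_H_free; exists (fun h => val (f h)); split.
    by move=> a b /val_inj /finj.
  by move=> a b; rewrite fE.
have [g [gc gA]] := dichromatic_colouring (H_free_bound ET_tour ET_free).
exists (fun v => if insub v is Some t then g t else 0).
split=> [v vK|i s hs /allP sA]; first by rewrite insubT gc.
have sK v : v \in s -> v \in K by move/sA; rewrite inE => /andP [].
pose s' := pmap (insub : V -> option T) s.
have s's : map val s' = s.
  rewrite (pmap_filter (insubK _)); apply/all_filterP/allP => v /sK vK.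
  by rewrite insubT.
case: hs => us ss cs; apply: (gA i s').
  split; first by rewrite -(map_inj_uniq val_inj) s's.
    by rewrite -(size_map val) s's.
  by rewrite /ET -cycle_map s's.
apply/allP => t ts; have /sA : val t \in s by rewrite -s's map_f.
by rewrite !inE valK => /andP [].
Qed.

Lemma tournament_colourings :
  exists G : {set V} -> V -> nat,
    forall K, tournament_on E K -> colouring E K c (G K).
Proof.
apply: (@fin_all_exists _ (fun _ => V -> nat)
          (fun K g => tournament_on E K -> colouring E K c g)) => K.
have [/tournament_colouring [g hg]|notK] := classic (tournament_on E K).
  by exists g.
by exists (fun _ => 0).
Qed.

End TournamentColouring.

Section Layers.
Variables (V : finType) (E : rel V).

Definition local_tournament :=
  forall x, tournament_on E (out_nbhd E x) /\ tournament_on E (in_nbhd E x).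

Hypothesis E_local : local_tournament.

Lemma out_adjacent x a b : E x a -> E x b -> a != b -> E a b || E b a.
Proof. by move=> xa xb ab; case: (E_local x) => [[_ _ ->]] //; rewrite inE. Qed.

Lemma in_adjacent x a b : E a x -> E b x -> a != b -> E a b || E b a.
Proof. by move=> ax bx ab; case: (E_local x) => [_ [_ _ ->]] //; rewrite inE. Qed.

Definition bfs_distance (R : {set V}) (x : V) (d : V -> nat) :=
  [/\ x \in R, d x = 0, forall v, v \in R -> d v = 0 -> v = x,
      forall u v, u \in R -> v \in R -> E u v -> d v <= (d u).+1 &
      forall v, v \in R -> 0 < d v -> exists2 q, q \in R & E q v /\ (d q).+1 = d v].

Variables (R : {set V}) (x : V) (d : V -> nat).
Hypothesis d_bfs : bfs_distance R x d.

Let xR : x \in R. Proof. by case: d_bfs. Qed.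
Let d_root : d x = 0. Proof. by case: d_bfs. Qed.
Let d_zero v : v \in R -> d v = 0 -> v = x. Proof. by case: d_bfs => _ _ h _ _; apply: h. Qed.
Let d_arc u v : u \in R -> v \in R -> E u v -> d v <= (d u).+1.
Proof. by case: d_bfs => _ _ _ h _; apply: h. Qed.
Let d_parent v : v \in R -> 0 < d v -> exists2 q, q \in R & E q v /\ (d q).+1 = d v.
Proof. by case: d_bfs => _ _ _ _ h; apply: h. Qed.

Definition layer_arc := [rel u v | [&& E u v, u \in R, v \in R & d u == d v]].

Lemma layer_connect_R a b : a \in R -> connect layer_arc a b -> b \in R.
Proof. by move=> aR ab; apply: connect_forward ab aR _ => u v /and4P []. Qed.

Lemma layer_connect_dist a b : connect layer_arc a b -> d b = d a.
Proof.
move=> ab; apply/eqP; apply: (connect_forward (P := fun v => d v == d a) ab) => //.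
by move=> u v /and4P [_ _ _ /eqP <-].
Qed.

(* An arc going back to a strictly smaller distance starts at an in-neighbour
   of the root: follow parents of its head down to [x], using that the
   in-neighbourhood of each parent's child is a tournament. *)
Lemma back_arc_to_root u w : u \in R -> w \in R -> d w < d u -> E u w -> E u x.
Proof.
move=> uR; move dw: (d w) => n; elim: n w dw => [|n IHn] w dw wR.
  by rewrite -(d_zero wR dw).
move=> ltu uw; have [q qR [qw dq]] := d_parent wR (ltac:(by rewrite dw)).
have qu : q != u by apply/eqP => equ; move: ltu; rewrite -dw -dq equ; lia.
case/orP: (in_adjacent qw uw qu) => [quu|uq].
  by have := d_arc qR uR quu; rewrite dq dw leqNgt ltu.
exact: IHn q (succn_inj (etrans dq dw)) qR (ltnW ltu) uq.
Qed.

(* Beyond distance one, the in-neighbours of the root are closed under layer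
   arcs: an arc [x -> w] would put [w] at distance at most one. *)
Lemma layer_arc_root u w : layer_arc u w -> 1 < d u -> E u x -> E w x.
Proof.
move=> /and4P [uw uR wR /eqP duw] du1 ux.
have xw : x != w by apply/eqP => exw; move: du1; rewrite duw -exw d_root.
case/orP: (out_adjacent ux uw xw) => // xw'.
by have := d_arc xR wR xw'; rewrite d_root -duw leqNgt du1.
Qed.

(* A parent [q] of [v] dominates every layer in-neighbour [u] of [v] that is
   not an in-neighbour of the root: otherwise [u -> q] is a back arc. *)
Lemma layer_arc_parent u v q : layer_arc u v -> ~~ E u x -> q \in R -> E q v ->
  (d q).+1 = d v -> E q u.
Proof.
move=> /and4P [uv uR vR /eqP duv] nux qR qv dq.
have qu : q != u by apply/eqP => equ; move: dq; rewrite equ duv; lia.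
case/orP: (in_adjacent qv uv qu) => // uq.
have dqu : d q < d u by rewrite duv -dq.
by rewrite (back_arc_to_root uR qR dqu uq) in nux.
Qed.

(* At distance one they are out-neighbours of [x]; further out,
   either both are in-neighbours of [x], or a parent of one dominates both. *)
Lemma layer_strong_adjacent a b : a \in R ->
  connect layer_arc a b -> connect layer_arc b a -> a != b -> E a b || E b a.
Proof.
move=> aR ab ba neab; have bR := layer_connect_R aR ab.
have db := layer_connect_dist ab.
case da: (d a) db => [|[|n]] db.
- by rewrite (d_zero aR da) (d_zero bR db) eqxx in neab.
- have [q qR [qa dq]] := d_parent aR (ltac:(by rewrite da)).
  have [q' q'R [q'b dq']] := d_parent bR (ltac:(by rewrite db)).
  have qx : q = x := d_zero qR (succn_inj (etrans dq da)).
  have q'x : q' = x := d_zero q'R (succn_inj (etrans dq' db)).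
  by rewrite qx in qa; rewrite q'x in q'b; apply: out_adjacent qa q'b neab.
- have [bx|nbx] := boolP (E b x).
    have /andP [ax _] : E a x && (1 < d a).
      apply: (connect_forward (P := fun v => E v x && (1 < d v)) ba).
        by rewrite bx db.
      move=> u v uv /andP [ux du]; case/and4P: (uv) => _ _ _ /eqP <-.
      by rewrite (layer_arc_root uv).
    exact: in_adjacent ax bx neab.
  have [q qR [qb dq]] := d_parent bR (ltac:(by rewrite db)).
  pose P v := [&& E q v, ~~ E v x & d v == (d q).+1].
  have /and3P [qa _ _] : P a.
    apply: contraT => nPa.
    suff : ~~ P b by rewrite /P qb nbx dq eqxx.
    apply: (connect_forward (P := fun v => ~~ P v) ab nPa) => u v uv.
    apply: contra => /and3P [qv nvx /eqP dv].
    have du : d u = (d q).+1 by case/and4P: (uv) => _ _ _ /eqP ->.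
    have nux : ~~ E u x.
      by apply: contra nvx; apply: layer_arc_root uv _; rewrite du dq db.
    by rewrite /P (layer_arc_parent uv nux qR qv) // du eqxx nux.
  exact: out_adjacent qa qb neab.
Qed.

Hypothesis E_oriented : oriented E.
Variables (c : nat) (G : {set V} -> V -> nat).
Hypothesis G_colours : forall K, tournament_on E K -> colouring E K c (G K).

Definition block v := [set w | connect layer_arc v w && connect layer_arc w v].

Lemma block_mem v : v \in block v.
Proof. by rewrite inE connect0. Qed.

Lemma block_eq y z : connect layer_arc y z -> connect layer_arc z y -> block z = block y.
Proof.
move=> yz zy; apply/setP => w; rewrite !inE.
apply/andP/andP => [[zw wz]|[yw wy]]; split; apply: connect_trans; eassumption.
Qed.

Lemma block_tournament v : v \in R -> tournament_on E (block v).
Proof.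
move=> vR; case: E_oriented => Eloop Eanti; split=> [a _|a b _ _|a b]; [exact: Eloop|exact: Eanti|].
rewrite !inE => /andP [va av] /andP [vb bv].
apply: layer_strong_adjacent (connect_trans av vb) (connect_trans bv va).
exact: layer_connect_R vR va.
Qed.

Lemma block_colour_lt v : v \in R -> G (block v) v < c.
Proof. by move=> vR; apply: (G_colours (block_tournament vR)).1 (block_mem v). Qed.

Definition layer_colour v := odd (d v) * c + G (block v) v.

(* A monochromatic cycle keeps the parity of the distance, so it never uses an
   arc increasing the distance; hence it stays in one layer, then in one block,
   where the colouring [G] of that block is acyclic. *)
Lemma layer_colouring : colouring E R (2 * c) layer_colour.
Proof.
split=> [v vR|i s hs /allP sA].
  by have := block_colour_lt vR; rewrite /layer_colour; case: odd => /=; lia.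
have sR z : z \in s -> z \in R by move/sA; rewrite inE => /andP [].
have same y z : y \in s -> z \in s ->
    odd (d y) = odd (d z) /\ G (block y) y = G (block z) z.
  move=> ys zs; apply: (palette_eq (c := c)); rewrite ?block_colour_lt ?sR //.
  by move: (sA y ys) (sA z zs); rewrite !inE /layer_colour => /andP [_ /eqP ->] /andP [_ /eqP ->].
case: (hs) => _ ss cs.
have dmono : {in s &, forall u v, E u v -> d v <= d u}.
  move=> u v us vs uv; have := d_arc (sR u us) (sR v vs) uv.
  rewrite leq_eqVlt ltnS => /orP [/eqP dv|//].
  by have [] := same u v us vs; rewrite dv /=; case: odd.
have dle : {in s &, forall y z, d z <= d y}.
  move=> y z ys zs; apply: (cycle_forward (P := fun v => d v <= d y) cs _ ys zs) => //.
  by move=> u v us vs uv du; apply: leq_trans (dmono u v us vs uv) du.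
have dconst : {in s &, forall y z, d z = d y}.
  by move=> y z ys zs; apply/eqP; rewrite eqn_leq !dle.
have conn : {in s &, forall y z, connect layer_arc y z}.
  move=> y z ys zs; apply: (cycle_forward (P := connect layer_arc y) cs _ ys zs).
    move=> u v us vs uv yu; apply: connect_trans yu (connect1 _).
    by rewrite /= uv !sR // (dconst u v us vs) eqxx.
  exact: connect0.
have [y ys] : exists y, y \in s by case: (s) ss => // y s' _; exists y; apply: mem_head.
have blk z : z \in s -> block z = block y by move=> zs; apply: block_eq; apply: conn.
apply: (colouring_cycle (G_colours (block_tournament (sR y ys))) hs).
- by move=> z zs; rewrite -(blk z zs) block_mem.
- move=> u v us vs; have [_ uy] := same u y us ys; have [_ vy] := same v y vs ys.
  by move: uy vy; rewrite (blk u us) (blk v vs) => -> ->.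
Qed.

End Layers.

Section ReachDistance.
Variables (V : finType) (E : rel V) (S : {set V}) (x : V).
Hypothesis xS : x \in S.

Definition induced_arc := [rel u v | [&& E u v, u \in S & v \in S]].
Definition reach_set := [set v | connect induced_arc x v].

Lemma in_reach_set v : (v \in reach_set) = connect induced_arc x v.
Proof. by rewrite inE. Qed.

Fixpoint within k v :=
  if k is k'.+1 then within k' v || [exists u, within k' u && induced_arc u v]
  else v == x.

Lemma within_step k u v : within k u -> induced_arc u v -> within k.+1 v.
Proof. by move=> ku uv /=; apply/orP; right; apply/existsP; exists u; rewrite ku. Qed.

Lemma within_reach k v : within k v -> v \in reach_set.
Proof.
rewrite in_reach_set; elim: k v => [|k IHk] v /=; first by move/eqP ->.
case/orP => [/IHk //|/existsP [u /andP [/IHk xu uv]]].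
exact: connect_trans xu (@connect1 _ induced_arc u v uv).
Qed.

Lemma reach_within v : v \in reach_set -> exists k, within k v.
Proof.
rewrite in_reach_set => /connectP [p xp ->]; exists (size p).
elim/last_ind: p xp => [_|p y IHp]; first exact: eqxx.
rewrite rcons_path last_rcons size_rcons => /andP [xp py].
exact: within_step (IHp xp) py.
Qed.

(* Every vertex is reached in finitely many steps, or not reached at all;
   this makes the minimum below well defined on all vertices. *)
Lemma within_exists v : exists k, within k v || (v \notin reach_set).
Proof.
have [/reach_within [k kv]|nv] := boolP (v \in reach_set); first by exists k; rewrite kv.
by exists 0; apply/orP; right.
Qed.

(* Breadth-first distance from [x] (meaningful on [reach_set]). *)
Definition dist v : nat := ex_minn (within_exists v).

Lemma dist_min v : v \in reach_set ->
  within (dist v) v /\ forall k, within k v -> dist v <= k.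
Proof.
move=> vR; rewrite /dist; case: ex_minnP => m; rewrite vR orbF => mv mmin.
by split=> // k kv; apply: mmin; rewrite kv.
Qed.

Lemma reach_set_sub : reach_set \subset S.
Proof.
apply/subsetP => v; rewrite in_reach_set => xv.
by apply: (connect_forward (P := mem S) xv xS) => u w /and3P [].
Qed.

Lemma reach_set_closed u v : u \in reach_set -> v \in S -> E u v -> v \in reach_set.
Proof.
move=> uR vS uv; move: (uR); rewrite !in_reach_set => xu; apply: connect_trans xu (connect1 _).
by rewrite /= uv vS (subsetP reach_set_sub u uR).
Qed.

(* The minimal number of steps is a breadth-first distance on [reach_set]:
   a vertex first reached at step [j+1] has a parent first reached at [j]. *)
Lemma dist_bfs : bfs_distance E reach_set x dist.
Proof.
have xR : x \in reach_set by rewrite in_reach_set connect0.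
have arcR u v : u \in reach_set -> v \in reach_set -> E u v -> induced_arc u v.
  by move=> uR vR uv; rewrite /= uv !(subsetP reach_set_sub).
split=> //.
- by have [_ /(_ 0)] := dist_min xR; rewrite leqn0 => /(_ (eqxx x)) /eqP.
- by move=> v vR v0; have [] := dist_min vR; rewrite v0 => /eqP.
- move=> u v uR vR uv; have [ku _] := dist_min uR.
  exact: (dist_min vR).2 _ (within_step ku (arcR u v uR vR uv)).
move=> v vR; have [] := dist_min vR; case: (dist v) => // j /= + vmin _.
case/orP => [/vmin|/existsP [q /andP [qj qv]]]; first by rewrite ltnn.
have qR := within_reach qj; exists q => //; split; first by case/and3P: qv.
apply/eqP; rewrite eqn_leq ltnS (dist_min qR).2 //=.
exact: (vmin _ (within_step (dist_min qR).1 qv)).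
Qed.

End ReachDistance.

Section Main.
Variables (H : finType) (EH : rel H) (c : nat).
Hypothesis H_free_bound : forall (T : finType) (ET : rel T),
  tournament ET -> ~ contains_induced EH ET -> dichromatic ET <= c.
Variables (V : finType) (E : rel V).
Hypotheses (E_oriented : oriented E) (E_local : local_tournament E).
Hypothesis E_H_free : ~ contains_induced EH E.

Lemma colouring_of_set n (S : {set V}) : #|S| <= n -> exists f, colouring E S (2 * c) f.
Proof.
have [G G_colours] := tournament_colourings H_free_bound E_H_free.
elim: n S => [|n IHn] S.
  by rewrite leqn0 cards_eq0 => /eqP ->; exists (fun _ => 0); apply: colouring_set0.
have [->|[x xS] Sn] := set_0Vmem S; first by exists (fun _ => 0); apply: colouring_set0.
have [g g_col] : exists g, colouring E (S :\: reach_set E S x) (2 * c) g.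
  apply: IHn; rewrite -ltnS; apply: leq_trans Sn; apply: proper_card.
  by apply/properP; split; [apply: subsetDl | exists x; rewrite // !inE connect0].
exists (fun v => if v \in reach_set E S x then layer_colour E (reach_set E S x)
                   (dist E S x) c G v else g v).
apply: colouring_glue (reach_set_closed xS) _ g_col.
exact: (@layer_colouring V E E_local _ _ _ (dist_bfs E xS) E_oriented c G G_colours).
Qed.

End Main.

(* Theorem 4.1: local tournaments with no induced copy of a hero H have
   dichromatic number at most twice the bound for H-free tournaments; only
   the fact that [c] bounds H-free tournaments is needed. *)
Theorem theorem4p1 (H : finType) (EH : rel H) (c : nat) :
  hero EH ->
  (* c is the maximum dichromatic number of an H-free tournament *)
  (forall (T : finType) (ET : rel T),
      tournament ET -> ~ contains_induced EH ET -> dichromatic ET <= c) ->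
  (exists (T : finType) (ET : rel T),
      [/\ tournament ET, ~ contains_induced EH ET & dichromatic ET = c]) ->
  forall (V : finType) (E : rel V),
    oriented E ->
    (forall x : V, tournament_on E (out_nbhd E x) /\ tournament_on E (in_nbhd E x)) ->
    ~ contains_induced EH E ->
    dichromatic E <= 2 * c.
Proof.
move=> _ H_free_bound _ V E E_oriented E_local E_H_free.
have [f f_col] := colouring_of_set H_free_bound E_oriented E_local E_H_free
                    (leqnn #|[set: V]|).
exact: dichromatic_le f_col.
Qed.
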